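(* Let $\lambda>0$ and let $\ell$ be a nondegenerate Hermitian form and $A$ an antilinear operator on a complex $k$-dimensional space, represented in some basis by matrices $H$ and $J_{\lambda,k}$ respectively, where $H$ is a Hankel matrix with $H_{i,j}=0$ for all $i+j\le k$. Then there is a basis with respect to which $\ell$ and $A$ are represented by $\pm S_k$ and $J_{\lambda,k}$ respectively.
   Context: An antilinear operator satisfies $A(zv+w)=\bar zAv+Aw$; $\ell$ is linear in the first argument, conjugate-linear in the second. In a basis $e_1,\dots,e_k$, $\ell$ is represented by $H_{i,j}=\ell(e_j,e_i)$ and $A$ by $C$ with $Ae_i=\sum_m C_{m,i}e_m$; a change of basis with transition matrix $M$ sends $(H,C)$ to $((M^{-1})^*HM^{-1},MC\overline M^{-1})$. $T_k$ has $(i,j)$ entry $1$ if $j-i=1$ and $0$ otherwise; $J_{\lambda,k}=\lambda I_k+T_k$; $S_k$ has $(i,j)$ entry $1$ if $i+j=k+1$ and $0$ otherwise. *)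

From HB Require Import structures.
From mathcomp Require Import all_boot all_order all_algebra.
Set Implicit Arguments. Unset Strict Implicit. Unset Printing Implicit Defensive.
Import Order.TTheory GRing.Theory Num.Theory.
Local Open Scope ring_scope.

(* Indices are 0-based here: paper index i corresponds to i.+1. *)

Definition cadj_mx (C : numClosedFieldType) (m n : nat) (A : 'M[C]_(m, n)) : 'M[C]_(n, m) :=
  map_mx Num.conj (A^T).

Definition cconj_mx (C : numClosedFieldType) (m n : nat) (A : 'M[C]_(m, n)) : 'M[C]_(m, n) :=
  map_mx Num.conj A.

Definition Tmx (C : numClosedFieldType) (k : nat) : 'M[C]_k :=
  \matrix_(i < k, j < k) (if j == i.+1 :> nat then 1 else 0).

Definition Jmx (C : numClosedFieldType) (lam : C) (k : nat) : 'M[C]_k :=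
  lam%:M + Tmx C k.

(* S_k : (i,j) entry 1 iff i + j = k + 1 (1-based), i.e. i + j + 1 = k 0-based *)
Definition Smx (C : numClosedFieldType) (k : nat) : 'M[C]_k :=
  \matrix_(i < k, j < k) (if (i + j).+1 == k then 1 else 0).

Definition hermitian_mx (C : numClosedFieldType) (k : nat) (H : 'M[C]_k) : Prop :=
  cadj_mx H = H.

Definition hankel_mx (C : numClosedFieldType) (k : nat) (H : 'M[C]_k) : Prop :=
  forall i j i' j' : 'I_k, (i + j = i' + j')%N -> H i j = H i' j'.

From HB Require Import structures.
From mathcomp Require Import all_boot all_order all_algebra.
From mathcomp Require Import ring zify.
Import Order.TTheory GRing.Theory Num.Theory.
Local Open Scope ring_scope.

(* Writing T for the nilpotent shift, the conditions on H say exactly that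
   H = S h(T) for a real polynomial h, and h(0) <> 0 since H is invertible.
   As p(T)^T S = S p(T), the congruence by N = q(T) with q real turns H into
   S (q^2 h)(T).  Pick s = +-1 with s / h(0) > 0; Hensel lifting gives a real q
   with q^2 h = s mod X^k, whence N^* H N = s S.  Being a real polynomial in T,
   N is its own conjugate and commutes with J = lam + T, so J is unchanged. *)

(* [real_num_pred] rather than [Num.real], so that the closure instances of
   [polyOver] are found. *)
Local Notation real_poly := (polyOver (@Num.Def.real_num_pred _)).

Section UpperTriangularToeplitz.
Context {C : numClosedFieldType} {n : nat}.
Implicit Types (p q : {poly C}) (i j : 'I_n.+1).

Local Notation T := (Tmx C n.+1).
Local Notation S := (Smx C n.+1).

Lemma mulmx_Tmx_entry m (A : 'M[C]_(m, n.+1)) (i : 'I_m) j :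
  (A *m T) i j = if (0 < j)%N then A i (inord j.-1) else 0.
Proof.
rewrite mxE; case: posnP => [j0 | j_gt0].
  by apply: big1 => l _; rewrite mxE j0 mulr0.
have j1_lt : (j.-1 < n.+1)%N by rewrite prednK // ltnW.
rewrite (bigD1 (inord j.-1)) //= mxE inordK // prednK // eqxx mulr1 big1 ?addr0 //.
move=> l l_neq; rewrite mxE; case: eqP => [j_eq | _]; last by rewrite mulr0.
by move: l_neq; rewrite j_eq /= inord_val eqxx.
Qed.

Lemma horner_Tmx_entry p i j :
  horner_mx T p i j = if (i <= j)%N then p`_(j - i) else 0.
Proof.
elim/poly_ind: p i j => [|p c IHp] i j; first by rewrite rmorph0 mxE coef0 if_same.
rewrite rmorphD rmorphM /= horner_mx_X horner_mx_C mxE mulmx_Tmx_entry.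
rewrite coefD coefMX coefC !mxE.
have [i_lt j_lt] := (ltn_ord i, ltn_ord j); rewrite -val_eqE /= subn_eq0.
case: (ltngtP i j) => [lt_ij | lt_ji | <-].
- rewrite ifT ?IHp ?inordK ?ifT ?mulr0n ?addr0; try lia.
  by congr (p`_ _); lia.
- rewrite mulr0n addr0; case: ifP => // j_gt0.
  by rewrite IHp inordK ?ifF //; lia.
- rewrite mulr1n; case: ifP => // i_gt0.
  by rewrite IHp inordK ?ifF //; lia.
Qed.

Lemma horner_Tmx_eq p q :
  (forall m, (m <= n)%N -> p`_m = q`_m) -> horner_mx T p = horner_mx T q.
Proof.
move=> pq; apply/matrixP => i j; rewrite !horner_Tmx_entry.
by case: ifP => // _; rewrite pq // (leq_trans (leq_subr _ _)) // -ltnS.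
Qed.

Lemma det_horner_Tmx p : \det (horner_mx T p) = p`_0 ^+ n.+1.
Proof.
rewrite -det_tr det_trig; last first.
  by apply/is_trig_mxP => i j lt_ij; rewrite mxE horner_Tmx_entry leqNgt lt_ij.
under eq_bigr => i _ do rewrite mxE horner_Tmx_entry leqnn subnn.
by rewrite prodr_const card_ord.
Qed.

Lemma mul_Smx_entry m (A : 'M[C]_(n.+1, m)) i (j : 'I_m) :
  (S *m A) i j = A (rev_ord i) j.
Proof.
rewrite mxE (bigD1 (rev_ord i)) //= mxE /= subnKC -1?ltnS // eqxx mul1r.
rewrite big1 ?addr0 // => l l_neq; rewrite mxE; case: eqP => [il_eq | _]; last by rewrite mul0r.
by case/eqP: l_neq; apply: val_inj => /=; lia.
Qed.

Lemma mulmx_Smx_entry m (A : 'M[C]_(m, n.+1)) (i : 'I_m) j :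
  (A *m S) i j = A i (rev_ord j).
Proof.
rewrite mxE (bigD1 (rev_ord j)) //= mxE /= addnC subnKC -1?ltnS // eqxx mulr1.
rewrite big1 ?addr0 // => l l_neq; rewrite mxE; case: eqP => [lj_eq | _]; last by rewrite mulr0.
by case/eqP: l_neq; apply: val_inj => /=; lia.
Qed.

Lemma Smx_sqr : S *m S = 1%:M.
Proof.
apply/matrixP => i j; rewrite mul_Smx_entry !mxE /= -val_eqE /=.
have i_lt := ltn_ord i.
have -> : ((n.+1 - i.+1 + j).+1 == n.+1) = (i == j :> nat) by apply/eqP/eqP; lia.
by case: eqP.
Qed.

Lemma Smx_unit : S \in unitmx.
Proof. by case/mulmx1_unit: Smx_sqr. Qed.

Lemma trmx_horner_Tmx_Smx p : (horner_mx T p)^T *m S = S *m horner_mx T p.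
Proof.
apply/matrixP => i j; rewrite mulmx_Smx_entry mul_Smx_entry mxE !horner_Tmx_entry /=.
have [i_lt j_lt] := (ltn_ord i, ltn_ord j).
have -> : (n - j <= i)%N = (n - i <= j)%N by apply/idP/idP; lia.
by case: ifP => // _; congr (p`_ _); lia.
Qed.

Lemma conj_horner_Tmx_real p : p \in real_poly -> cconj_mx (horner_mx T p) = horner_mx T p.
Proof.
move=> /polyOverP p_real; apply/matrixP => i j; rewrite !mxE horner_Tmx_entry.
by case: ifP => _; [exact/CrealP | rewrite rmorph0].
Qed.

Lemma cadj_horner_Tmx_real p : p \in real_poly -> cadj_mx (horner_mx T p) = (horner_mx T p)^T.
Proof. by move/conj_horner_Tmx_real=> {2}<-; apply/matrixP => i j; rewrite !mxE. Qed.

Lemma cadj_horner_Tmx_Smx p q : q \in real_poly ->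
  cadj_mx (horner_mx T q) *m (S *m horner_mx T p) *m horner_mx T q =
  S *m horner_mx T (q * q * p).
Proof.
move=> q_real; rewrite cadj_horner_Tmx_real // mulmxA trmx_horner_Tmx_Smx.
by rewrite -!mulmxA !mulmxE -!rmorphM [p * q]mulrC mulrA.
Qed.

Lemma Jmx_horner_Tmx lam : Jmx lam n.+1 = horner_mx T (lam%:P + 'X).
Proof. by rewrite rmorphD /= horner_mx_C horner_mx_X. Qed.

Definition hankel_poly (H : 'M[C]_n.+1) : {poly C} := \poly_(m < n.+1) H ord_max (inord m).

Lemma hankel_Smx_horner_Tmx H :
  hankel_mx H -> (forall i j, (i + j + 2 <= n.+1)%N -> H i j = 0) ->
  H = S *m horner_mx T (hankel_poly H).
Proof.
move=> hankH H0; apply/matrixP => i j; rewrite mul_Smx_entry horner_Tmx_entry /=.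
have [i_lt j_lt] := (ltn_ord i, ltn_ord j).
case: ifP => [le_ij | gt_ij]; last by apply: H0; move/negbT: gt_ij; lia.
by rewrite coef_poly ifT; [apply: hankH; rewrite /= inordK | ]; lia.
Qed.

Lemma hankel_poly_real H : hermitian_mx H -> hankel_mx H -> hankel_poly H \in real_poly.
Proof.
move=> hermH hankH; apply/polyOverP => m; rewrite coef_poly; case: ifP => _; last exact: rpred0.
have sym : H ord_max (inord m) = H (inord m) ord_max by apply: hankH; rewrite addnC.
by apply/CrealP; rewrite {1}sym -[in RHS]hermH !mxE.
Qed.

End UpperTriangularToeplitz.

Lemma real_poly_sqrt_trunc {C : numClosedFieldType} (m : nat) (h : {poly C}) (c : C) :
  h \in real_poly -> 0 < c / h`_0 ->
  exists2 q, q \in real_poly & forall i, (i <= m)%N -> (q * q * h)`_i = c%:P`_i.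
Proof.
move=> h_real c_pos; set q0 := sqrtC (c / h`_0).
have h0_neq0 : h`_0 != 0 by apply: contraTneq c_pos => ->; rewrite invr0 mulr0 ltxx.
have q0_real : q0 \is Num.real by rewrite ger0_real // sqrtC_ge0 ltW.
have q0_neq0 : q0 != 0 by rewrite sqrtC_eq0 gt_eqF.
have q0_sqr : q0 ^+ 2 * h`_0 = c by rewrite sqrtCK mulrVK // unitfE.
suff [q [q_real _ qE]] : exists q, [/\ q \in real_poly, q`_0 = q0 &
    forall i, (i <= m)%N -> (q * q * h - c%:P)`_i = 0].
  by exists q => // i /qE /eqP; rewrite coefB subr_eq0 => /eqP.
elim: m => [|m [q [q_real q0E qE]]].
  exists q0%:P; split; rewrite ?polyOverC ?coefC //.
  by move=> i; rewrite leqn0 => /eqP ->; rewrite coefB !coef0M !coefC -q0_sqr expr2 subrr.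
pose e := q * q * h - c%:P.
have c_real : c \is Num.real by rewrite -q0_sqr rpredM ?rpredX // (polyOverP h_real).
have e_real : e \in real_poly by rewrite rpredB ?rpredM ?polyOverC.
pose t := - e`_m.+1 / (2 * q0 * h`_0).
have t_real : t \is Num.real by rewrite rpredM ?rpredN ?rpredV ?rpredM ?rpred_nat // (polyOverP _).
exists (q + t%:P * 'X^(m.+1)); split.
- by rewrite rpredD ?rpredM ?rpredX ?polyOverC ?polyOverX.
- by rewrite coefD coefCM coefXn mulr0 addr0.
pose r := (2 * t)%:P * (q * h) + (t ^+ 2)%:P * ('X^(m.+1) * h).
have -> : (q + t%:P * 'X^(m.+1)) * (q + t%:P * 'X^(m.+1)) * h - c%:P = e + 'X^(m.+1) * r.
  by rewrite /e /r; ring.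
move=> i le_im; rewrite coefD coefXnM; case: ltnP => [lt_im | ge_im].
  by rewrite addr0 qE.
have -> : i = m.+1 by apply/eqP; rewrite eqn_leq le_im.
have r0E : r`_0 = 2 * t * (q0 * h`_0).
  by rewrite /r coefD !coef0M !coefC coefXn mul0r mulr0 addr0 q0E.
by rewrite subnn r0E /t; field; rewrite q0_neq0 h0_neq0.
Qed.

Lemma real_sign_div_gt0 {R : numFieldType} (x : R) :
  x \is Num.real -> x != 0 -> exists2 s : R, s = 1 \/ s = -1 & 0 < s / x.
Proof.
move=> x_real x_neq0; case: (real_ltgt0P x_real) => [x_gt0 | x_lt0 | x0].
- by exists 1; [left | rewrite mul1r invr_gt0].
- by exists (-1); [right | rewrite mulN1r oppr_gt0 invr_lt0].
- by move: x_neq0; rewrite x0 eqxx.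
Qed.

Theorem mainTheorem8 (C : numClosedFieldType) (k : nat) (lam : C) (H : 'M[C]_k) :
  0 < lam ->
  hermitian_mx H ->
  H \in unitmx ->
  hankel_mx H ->
  (forall i j : 'I_k, (i + j + 2 <= k)%N -> H i j = 0) ->
  exists M : 'M[C]_k, exists s : C,
    [/\ M \in unitmx, s = 1 \/ s = -1,
        cadj_mx (invmx M) *m H *m invmx M = s *: Smx C k &
        M *m Jmx lam k *m invmx (cconj_mx M) = Jmx lam k].
Proof.
case: k H => [|n] H _ hermH unitH hankH H0.
  by exists 1%:M, 1; split; [exact: unitmx1 | left | apply/matrixP => -[] | apply/matrixP => -[]].
have H_eq := hankel_Smx_horner_Tmx H hankH H0; set h := hankel_poly H in H_eq.
have h_real : h \in real_poly := hankel_poly_real H hermH hankH.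
have h0_neq0 : h`_0 != 0.
  move: unitH; rewrite H_eq unitmx_mul Smx_unit unitmxE det_horner_Tmx.
  by rewrite unitfE expf_eq0.
have [s s_sign s_pos] := real_sign_div_gt0 h`_0 (polyOverP h_real 0) h0_neq0.
have s_neq0 : s != 0 by apply: contraTneq s_pos => ->; rewrite mul0r ltxx.
have [q q_real qE] := real_poly_sqrt_trunc n h s h_real s_pos.
set N := horner_mx (Tmx C n.+1) q.
have congrH : cadj_mx N *m H *m N = s *: Smx C n.+1.
  by rewrite H_eq cadj_horner_Tmx_Smx // (horner_Tmx_eq _ s%:P) // horner_mx_C mul_mx_scalar.
have N_unit : N \in unitmx.
  have : cadj_mx N *m H *m N \in unitmx by rewrite congrH unitmxZ ?Smx_unit ?unitfE.
  by rewrite unitmx_mul => /andP[].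
exists (invmx N), s; split; rewrite ?unitmx_inv ?invmxK //.
rewrite /cconj_mx map_invmx -/(cconj_mx N) conj_horner_Tmx_real // invmxK.
by rewrite Jmx_horner_Tmx -mulmxA !mulmxE comm_horner_mx2 -mulmxE mulKmx.
Qed.
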